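(* For every integer $n\ge 3$ with $n\equiv 1$ or $n\equiv 3\pmod 4$, $\gamma_p(C_n\times C_4)=\gamma_t(C_n\times C_4)=n+1$.
   Context: All graphs are finite, simple and undirected. $C_n$ denotes the cycle of order $n$ and $G\times H$ the Cartesian product of graphs. For a graph $G$ without isolated vertices: a set $D\subseteq V(G)$ is a total dominating set if every vertex of $G$ (including those in $D$) has a neighbour in $D$; $\gamma_t(G)$ is the minimum size of a total dominating set. A set $D\subseteq V(G)$ is a paired dominating set if every vertex outside $D$ has a neighbour in $D$ and the induced subgraph $G[D]$ has a perfect matching; $\gamma_p(G)$ is the minimum size of a paired dominating set. *)

From mathcomp Require Import all_boot.
Set Implicit Arguments. Unset Strict Implicit. Unset Printing Implicit Defensive.

(* A simple graph on a finite vertex type T is given by a symmetric,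
   irreflexive boolean adjacency relation e. *)

(* Cycle C_n on vertices 'I_n (meaningful as a simple graph for n >= 3):
   i ~ j iff j = i+1 mod n or i = j+1 mod n. *)
Definition cycle_adj (n : nat) : rel 'I_n :=
  fun i j => (val j == (val i).+1 %% n) || (val i == (val j).+1 %% n).

Definition cart_adj (T1 T2 : finType) (e1 : rel T1) (e2 : rel T2)
  : rel (T1 * T2) :=
  fun x y => ((x.1 == y.1) && e2 x.2 y.2) || ((x.2 == y.2) && e1 x.1 y.1).

Definition torus_adj (n m : nat) : rel ('I_n * 'I_m) :=
  cart_adj (@cycle_adj n) (@cycle_adj m).

Definition total_dominating (T : finType) (e : rel T) (D : {set T}) : Prop :=
  forall x : T, exists2 y, y \in D & e x y.

Definition dominating (T : finType) (e : rel T) (D : {set T}) : Prop :=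
  forall x : T, x \notin D -> exists2 y, y \in D & e x y.

(* The induced subgraph G[D] has a perfect matching: there is a
   fixed-point-free involution of D pairing each vertex with a neighbour. *)
Definition has_perfect_matching (T : finType) (e : rel T) (D : {set T}) : Prop :=
  exists p : T -> T,
    forall x, x \in D -> [/\ p x \in D, p x != x, e x (p x) & p (p x) = x].

Definition paired_dominating (T : finType) (e : rel T) (D : {set T}) : Prop :=
  dominating e D /\ has_perfect_matching e D.

Definition is_min_size (T : finType) (P : {set T} -> Prop) (k : nat) : Prop :=
  (exists2 D, P D & #|D| = k) /\ (forall D, P D -> k <= #|D|).

Definition total_domination_number_is (T : finType) (e : rel T) (k : nat) : Prop :=
  is_min_size (total_dominating e) k.

Definition paired_domination_number_is (T : finType) (e : rel T) (k : nat) : Prop :=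
  is_min_size (paired_dominating e) k.

From mathcomp Require Import all_boot zify.
Set Implicit Arguments. Unset Strict Implicit. Unset Printing Implicit Defensive.

(* C_n x C_4 is 4-regular with 4n vertices, so double counting shows that a
   total dominating set has at least n vertices, and that one with exactly n
   vertices dominates every vertex exactly once.  In that case sending each
   vertex of D to its unique neighbour in D is a perfect matching of G[D], so
   n would be even.  Hence for odd n both parameters are at least n + 1.
   Conversely, the even-indexed columns, using rows {0,1} in columns
   0 mod 4 and rows {2,3} in columns 2 mod 4, form a paired (hence total)
   dominating set of size n + 1.  Only the parity of n matters. *)

Lemma perfect_matching_card_even (T : finType) (e : rel T) (D : {set T}) :
  has_perfect_matching e D -> ~~ odd #|D|.
Proof.
move=> [p hp]; have [m] := ubnP #|D|; elim: m D hp => // m IH D hp ltDm.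
have [->|[x xD]] := set_0Vmem D; first by rewrite cards0.
have [pxD pxx _ ppx] := hp x xD.
set P := [set x; p x]; have sPD : P \subset D by rewrite subUset !sub1set xD.
have cardD : #|D| = #|D :\: P| + 2.
  by rewrite -(cardsID P D) (setIidPr sPD) cards2 eq_sym pxx addnC.
rewrite cardD addn2 /= negbK; apply: IH; last by move: ltDm; rewrite cardD; lia.
move=> y; rewrite !inE => /andP [/norP [yx ypx] yD].
have [pyD pyy eypy ppy] := hp y yD.
split=> //; rewrite pyD andbT; apply/norP; split.
- by apply: contra ypx => /eqP pyx; rewrite -ppy pyx.
- by apply: contra yx => /eqP pypx; rewrite -ppy pypx ppx.
Qed.

Lemma paired_dominating_total (T : finType) (e : rel T) (D : {set T}) :
  paired_dominating e D -> total_dominating e D.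
Proof.
move=> [domD [p hp]] x; have [xD|] := boolP (x \in D); last exact: domD.
by have [pxD _ expx _] := hp x xD; exists (p x).
Qed.

Section DoubleCounting.

Variables (T : finType) (e : rel T) (k : nat).
Hypothesis in_degree_le : forall y, #|[set x | e x y]| <= k.

Lemma sum_card_nbrs_in_le (D : {set T}) :
  \sum_x #|[set y in D | e x y]| <= k * #|D|.
Proof.
have card_nbrs x : #|[set y in D | e x y]| = \sum_(y in D) e x y.
  rewrite -sum1_card big_mkcond [RHS]big_mkcond; apply: eq_bigr => y _.
  by rewrite inE; case: (y \in D); case: (e x y).
under eq_bigr do rewrite card_nbrs.
rewrite exchange_big mulnC -sum_nat_const; apply: leq_sum => y _.
apply: leq_trans (in_degree_le y); rewrite -sum1_card [X in _ <= X]big_mkcond.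
by apply: leq_sum => x _; rewrite inE; case: (e x y).
Qed.

Lemma total_dominating_card_le_sum (D : {set T}) : total_dominating e D ->
  #|T| <= \sum_x #|[set y in D | e x y]|
    ?= iff [forall x, 1 == #|[set y in D | e x y]|].
Proof.
move=> domD; rewrite -sum1_card; apply: leqif_sum => x _; apply: leqif_eq.
by have [y yD exy] := domD x; apply/card_gt0P; exists y; rewrite inE yD.
Qed.

Lemma total_dominating_card_ge (D : {set T}) :
  total_dominating e D -> #|T| <= k * #|D|.
Proof.
by move=> /total_dominating_card_le_sum le_sum; apply: leq_trans le_sum _;
  apply: sum_card_nbrs_in_le.
Qed.

Lemma tight_total_dominating_unique_nbr (D : {set T}) :
  total_dominating e D -> #|T| = k * #|D| ->
  forall x, #|[set y in D | e x y]| = 1.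
Proof.
move=> /total_dominating_card_le_sum le_sum tight.
have /forallP one_nbr : [forall x, 1 == #|[set y in D | e x y]|].
  by rewrite -(eq_leqif le_sum) eqn_leq le_sum tight sum_card_nbrs_in_le.
by move=> x; apply/esym/eqP/one_nbr.
Qed.

Hypotheses (e_sym : symmetric e) (e_irr : irreflexive e).

Lemma tight_total_dominating_matching (D : {set T}) :
  total_dominating e D -> #|T| = k * #|D| -> has_perfect_matching e D.
Proof.
move=> domD /(tight_total_dominating_unique_nbr domD) one_nbr.
have nbr_uniq x y z : y \in D -> e x y -> z \in D -> e x z -> y = z.
  move=> yD exy zD exz; have /eqP/cards1P [w Nx] := one_nbr x.
  have : y \in [set y in D | e x y] by rewrite inE yD exy.
  have : z \in [set y in D | e x y] by rewrite inE zD exz.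
  by rewrite Nx !inE => /eqP -> /eqP ->.
pose p x := odflt x [pick y in D | e x y].
have pP x : p x \in D /\ e x (p x).
  rewrite /p; case: pickP => [y /andP [] //| no_nbr].
  by have [y yD exy] := domD x; have := no_nbr y; rewrite yD exy.
exists p => x xD; have [pxD expx] := pP x.
split=> //.
- by apply: contraTneq expx => ->; rewrite e_irr.
- by have [ppxD epx] := pP (p x); apply: nbr_uniq ppxD epx xD _; rewrite e_sym.
Qed.

End DoubleCounting.

Lemma cycle_adj_sym n : symmetric (@cycle_adj n).
Proof. by move=> i j; rewrite /cycle_adj orbC. Qed.

Lemma cycle_adj_irr n : 1 < n -> irreflexive (@cycle_adj n).
Proof.
move=> n_gt1 i; rewrite /cycle_adj orbb; apply/negbTE/eqP.
have [i1_lt|i1_ge] := ltnP (val i).+1 n; first by rewrite modn_small //; lia.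
have i1_eq : (val i).+1 = n by apply/eqP; rewrite eqn_leq i1_ge andbT; exact: ltn_ord.
by rewrite i1_eq modnn; lia.
Qed.

Lemma cycle_adjS n (i : 'I_n) : cycle_adj i (ordS i).
Proof. by rewrite /cycle_adj eqxx. Qed.

Lemma cycle_adj_pred n (i : 'I_n) : cycle_adj i (ord_pred i).
Proof. by apply/orP; right; apply/eqP/esym; exact: (congr1 val (ord_predK i)). Qed.

Lemma cycle_adjP n (i j : 'I_n) : cycle_adj i j -> j = ordS i \/ j = ord_pred i.
Proof.
rewrite /cycle_adj => /orP [/eqP ij|/eqP ji]; first by left; apply: val_inj.
by right; rewrite -[j]ordSK; congr ord_pred; apply: val_inj.
Qed.

Lemma cart_adj_sym (T1 T2 : finType) (e1 : rel T1) (e2 : rel T2) :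
  symmetric e1 -> symmetric e2 -> symmetric (cart_adj e1 e2).
Proof.
by move=> e1_sym e2_sym x y; rewrite /cart_adj e1_sym e2_sym (eq_sym x.1) (eq_sym x.2).
Qed.

Lemma cart_adj_irr (T1 T2 : finType) (e1 : rel T1) (e2 : rel T2) :
  irreflexive e1 -> irreflexive e2 -> irreflexive (cart_adj e1 e2).
Proof. by move=> e1_irr e2_irr x; rewrite /cart_adj e1_irr e2_irr !andbF. Qed.

Lemma torus_adj_sym n m : symmetric (@torus_adj n m).
Proof. exact/cart_adj_sym/cycle_adj_sym/cycle_adj_sym. Qed.

Lemma torus_in_degree_le n m (y : 'I_n * 'I_m) : #|[set x | torus_adj x y]| <= 4.
Proof.
case: y => y1 y2.
set s := [:: (y1, ordS y2); (y1, ord_pred y2); (ordS y1, y2); (ord_pred y1, y2)].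
apply: leq_trans (card_size s); apply: subset_leq_card; apply/subsetP => -[x1 x2].
rewrite inE torus_adj_sym /torus_adj /cart_adj /= => /orP [] /andP [/eqP <- adj].
  by have [->|->] := cycle_adjP adj; rewrite !inE eqxx ?orbT.
by have [->|->] := cycle_adjP adj; rewrite !inE eqxx ?orbT.
Qed.

Lemma torus4_total_dominating_card_gt n (D : {set 'I_n * 'I_4}) :
  1 < n -> odd n -> total_dominating (@torus_adj n 4) D -> n < #|D|.
Proof.
move=> n_gt1 n_odd domD.
have card_V : #|{: 'I_n * 'I_4}| = 4 * n by rewrite card_prod !card_ord mulnC.
have := total_dominating_card_ge (@torus_in_degree_le n 4) domD.
rewrite card_V leq_pmul2l // leq_eqVlt => /orP [/eqP nD|//].
have e_irr : irreflexive (@torus_adj n 4) by apply: cart_adj_irr; apply: cycle_adj_irr.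
have /perfect_matching_card_even : has_perfect_matching (@torus_adj n 4) D.
  apply: (tight_total_dominating_matching (@torus_in_degree_le n 4)
    (@torus_adj_sym n 4) e_irr domD).
  by rewrite card_V -nD.
by rewrite -nD n_odd.
Qed.

Definition torus4_pds n : {set 'I_n * 'I_4} :=
  [set x : 'I_n * 'I_4 | ~~ odd x.1 && ((x.2 < 2) == (x.1 %% 4 == 0))].

Lemma cycle4_nbr_in_half (r : 'I_4) (b : bool) :
  exists2 s : 'I_4, cycle_adj r s & (s < 2) == b.
Proof.
case: r => -[|[|[|[|//]]]] ?; case: b;
  [exists (@Ordinal 4 1 isT) | exists (@Ordinal 4 3 isT)
  | exists (@Ordinal 4 0 isT) | exists (@Ordinal 4 2 isT)
  | exists (@Ordinal 4 1 isT) | exists (@Ordinal 4 3 isT)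
  | exists (@Ordinal 4 0 isT) | exists (@Ordinal 4 2 isT)] => //.
Qed.

Definition row_mate (r : 'I_4) : 'I_4 := if odd r then ord_pred r else ordS r.

Lemma row_mateP (r : 'I_4) :
  [/\ cycle_adj r (row_mate r), row_mate (row_mate r) = r
    & (row_mate r < 2) = (r < 2)].
Proof. by case: r => -[|[|[|[|//]]]] ?; split=> //; apply: val_inj. Qed.

Lemma sum_even_2 m : \sum_(0 <= i < m) (if odd i then 0 else 2) = m + odd m.
Proof.
elim: m => [|m IH]; first by rewrite big_geq.
by rewrite big_nat_recr //= IH; case: (odd m) => /=; lia.
Qed.

Lemma card_torus4_pds n : odd n -> #|torus4_pds n| = n.+1.
Proof.
move=> n_odd; rewrite -sum1_card big_mkcond /=.
have -> : \sum_(x : 'I_n * 'I_4) (if x \in torus4_pds n then 1 else 0)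
    = \sum_(i < n) \sum_(j < 4) (if (i, j) \in torus4_pds n then 1 else 0).
  by rewrite pair_bigA; apply: eq_bigr => -[].
have col_card (i : 'I_n) :
    \sum_(j < 4) (if (i, j) \in torus4_pds n then 1 else 0) = if odd i then 0 else 2.
  by rewrite !big_ord_recl big_ord0 !inE /=; case: (odd i); case: (i %% 4 == 0).
under eq_bigr do rewrite col_card.
by rewrite -(big_mkord xpredT (fun i => if odd i then 0 else 2)) sum_even_2 n_odd addn1.
Qed.

Lemma torus4_pds_total n : odd n -> total_dominating (@torus_adj n 4) (torus4_pds n).
Proof.
move=> n_odd [i r].
have adj_col (j : 'I_n) : cycle_adj i j -> ~~ odd j ->
    (r < 2) == (j %% 4 == 0) -> exists2 y, y \in torus4_pds n & torus_adj (i, r) y.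
  move=> ij j_even rj; exists (j, r); first by rewrite inE /= j_even rj.
  by rewrite /torus_adj /cart_adj /= eqxx ij orbT.
have [i_odd|i_even] := boolP (odd i); last first.
  have [s rs sb] := cycle4_nbr_in_half r (i %% 4 == 0).
  exists (i, s); first by rewrite inE /= i_even sb.
  by rewrite /torus_adj /cart_adj /= eqxx rs.
(* an odd column is neither the first nor, since n is odd, the last one *)
have iS : ordS i = i.+1 :> nat.
  apply: modn_small; have := ltn_ord i; rewrite leq_eqVlt => /orP [/eqP iSn|//].
  by have := congr1 odd iSn; rewrite /= i_odd n_odd.
have i_gt0 : 0 < i by rewrite lt0n; apply: contraTneq i_odd => ->.
have iP : ord_pred i = i.-1 :> nat.
  rewrite /= -subn1 addnC -addnBA // modnDl subn1 modn_small //.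
  exact: leq_ltn_trans (leq_pred i) (ltn_ord i).
have i_mod2 : i %% 2 = 1 by rewrite modn2 i_odd.
have [rS|rP] := boolP ((r < 2) == (i.+1 %% 4 == 0)).
  by apply: (adj_col _ (cycle_adjS i)); rewrite iS //= i_odd.
apply: (adj_col _ (cycle_adj_pred i)); rewrite iP.
  by move: i_odd; rewrite -(prednK i_gt0).
by move: rP; case: (r < 2); case: eqP; case: eqP => //; lia.
Qed.

Lemma torus4_pds_matching n : has_perfect_matching (@torus_adj n 4) (torus4_pds n).
Proof.
exists (fun x => (x.1, row_mate x.2)) => -[i r]; rewrite !inE /=.
have [r_mate mate_inv mate_half] := row_mateP r.
rewrite mate_inv mate_half => ir_in; split=> //.
- by apply: contraTneq r_mate => [[->]]; rewrite cycle_adj_irr.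
- by rewrite /torus_adj /cart_adj /= eqxx r_mate.
Qed.

Theorem lemma4p1 (n : nat) :
  3 <= n -> (n %% 4 = 1 \/ n %% 4 = 3) ->
  paired_domination_number_is (@torus_adj n 4) n.+1 /\
  total_domination_number_is (@torus_adj n 4) n.+1.
Proof.
move=> n_ge3 n_mod4; have n_gt1 : 1 < n by lia.
have n_mod2 : n %% 2 = 1 by case: n_mod4 => n4; lia.
have n_odd : odd n by rewrite modn2 in n_mod2; case: (odd n) n_mod2.
have pds_total := torus4_pds_total n_odd.
have pds_paired : paired_dominating (@torus_adj n 4) (torus4_pds n).
  by split; [move=> x _; apply: pds_total | apply: torus4_pds_matching].
have lower := @torus4_total_dominating_card_gt n _ n_gt1 n_odd.
split; split.
- by exists (torus4_pds n); last exact: card_torus4_pds.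
- by move=> D /paired_dominating_total; apply: lower.
- by exists (torus4_pds n); last exact: card_torus4_pds.
- exact: lower.
Qed.
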